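(* Let $\kappa,\kappa'$ be two functions as in the standing assumptions with $\lim_{t\to\infty}\kappa'(t)/\kappa(t)=0$. Then $\partial_{\kappa'}X_A\subsetneq\partial_\kappa X_A$, i.e. the inclusion is strict.
   Context: $A=\mathbb Z^2*\mathbb Z=\langle g_1,g_2,g_3\mid[g_1,g_2]\rangle$ and $X_A$ is the universal cover of its Salvetti complex: a CAT(0) tree of flats, each flat a Euclidean plane tiled by unit squares (cosets of $\langle g_1,g_2\rangle$), joined by unit-length edges labelled $g_3$ attached at lattice points; base point $\mathfrak o$ a lattice point of a flat at which a $g_3$ edge is attached; $\|x\|=d(\mathfrak o,x)$. For $\lambda:[0,\infty)\to[1,\infty)$ monotone increasing, concave and sublinear, put $\lambda(x)=\lambda(\|x\|)$, $\mathcal N_\lambda(Z,n)=\{x:d(x,Z)\le n\lambda(x)\}$; a closed set $Z$ is $\lambda$--contracting if there is $c_Z$ with $\operatorname{diam}(x_Z\cup y_Z)\le c_Z\lambda(x)$ whenever $d(x,y)\le d(x,Z)$; quasi-geodesic rays are continuous quasi-isometric embeddings of $[0,\infty)$ starting at $\mathfrak o$, two rays $\lambda$--fellow travel if each lies in some $\mathcal N_\lambda(\cdot,n)$ of the other; $\partial_\lambda X_A$ is the set of $\lambda$--fellow-travelling classes of $\lambda$--contracting quasi-geodesic rays (equivalently, the set of $\lambda$--contracting geodesic rays from $\mathfrak o$). *)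

From Stdlib Require Import Reals ZArith List Bool.
Import ListNotations.
Open Scope R_scope.

(* Concrete model of X_A, the universal cover of the Salvetti complex of   *)
(* A = Z^2 * Z = <g1,g2,g3 | [g1,g2]>: a tree of flats.                     *)
(* Flats (cosets of <g1,g2>) are indexed by their position in the          *)
(* Bass-Serre tree, i.e. by a word [l1; ...; lk] read from the root flat.  *)
(* A letter l = ((a,b), e) means: the child flat is attached, at its       *)
(* origin, by a unit g3-edge to the lattice point (a,b) of the parent flat;*)
(* e = true if the edge is traversed as g3 (parent -> child), e = false if *)
(* it is traversed as g3^{-1}.  Every lattice point carries exactly one    *)
(* outgoing and one incoming g3-edge; at the origin of a non-root flat one *)
(* of them is the edge to the parent, hence the constraint below.          *)

Definition Letter : Type := ((Z * Z) * bool)%type.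

Definition letter_eqb (a b : Letter) : bool :=
  Z.eqb (fst (fst a)) (fst (fst b)) && Z.eqb (snd (fst a)) (snd (fst b))
  && Bool.eqb (snd a) (snd b).

Fixpoint valid_from (prev : Letter) (w : list Letter) : Prop :=
  match w with
  | [] => True
  | a :: r => (fst a = (0%Z, 0%Z) -> snd a = snd prev) /\ valid_from a r
  end.

Definition valid_word (w : list Letter) : Prop :=
  match w with [] => True | a :: r => valid_from a r end.

(* Points: FP c x y = point (x,y) of the flat c (lattice points = vertices);
   EP c l t = interior point of the g3-edge joining the lattice point of
   flat c given by l to the origin of flat c ++ [l], at distance t from the
   parent flat c. *)
Inductive Pt : Type :=
  | FP (c : list Letter) (x y : R)
  | EP (c : list Letter) (l : Letter) (t : R).

Definition valid_pt (p : Pt) : Prop :=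
  match p with
  | FP c _ _ => valid_word c
  | EP c l t => valid_word (c ++ [l]) /\ 0 < t < 1
  end.

Definition XA : Type := { p : Pt | valid_pt p }.

Definition full (p : Pt) : list Letter :=
  match p with FP c _ _ => c | EP c l _ => c ++ [l] end.

Definition hR (l : Letter) : R * R := (IZR (fst (fst l)), IZR (snd (fst l))).
Definition norm2 (v : R * R) : R := sqrt (fst v * fst v + snd v * snd v).
Definition dist2 (a b : R * R) : R := norm2 (fst a - fst b, snd a - snd b).

(* cost of climbing from the origin of flat g ++ s up to the attaching
   lattice point (in g) of the first letter of s, minus the last edge *)
Definition climb (s : list Letter) : R :=
  fold_right (fun l acc => 1 + norm2 (hR l) + acc) 0 (tl s).

(* distance from the point to the attaching point in the parent flat *)
Definition u_up (p : Pt) : R :=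
  match p with FP _ x y => norm2 (x, y) + 1 | EP _ _ t => t end.

(* position/offset of the point relative to its own flat (full p) *)
Definition q_own (p : Pt) : R * R :=
  match p with FP _ x y => (x, y) | EP _ _ _ => (0, 0) end.
Definition e_own (p : Pt) : R :=
  match p with FP _ _ _ => 0 | EP _ _ t => 1 - t end.

Fixpoint lcp_rest (a b : list Letter) : list Letter * list Letter :=
  match a, b with
  | x :: a', y :: b' => if letter_eqb x y then lcp_rest a' b' else (a, b)
  | _, _ => (a, b)
  end.

(* entry point into the common ancestor flat, and distance to it *)
Definition pos_off (p : Pt) (s : list Letter) : (R * R) * R :=
  match s with
  | [] => (q_own p, e_own p)
  | l :: _ => (hR l, u_up p + climb s)
  end.

(* the CAT(0) (tree-of-flats) distance *)
Definition pdist (p q : Pt) : R :=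
  let s := lcp_rest (full p) (full q) in
  match p, q, fst s, snd s with
  | EP _ _ t1, EP _ _ t2, [], [] => Rabs (t1 - t2)
  | _, _, _, _ =>
      let a := pos_off p (fst s) in
      let b := pos_off q (snd s) in
      snd a + dist2 (fst a) (fst b) + snd b
  end.

Definition dX (x y : XA) : R := pdist (proj1_sig x) (proj1_sig y).

Definition o_pt : Pt := FP [] 0 0.
Definition o : XA := exist valid_pt o_pt I.

Definition nrm (x : XA) : R := dX o x.

Definition geodesic_ray (g : R -> XA) : Prop :=
  proj1_sig (g 0) = o_pt /\
  forall s t, 0 <= s -> 0 <= t -> dX (g s) (g t) = Rabs (s - t).

Definition on_ray (g : R -> XA) (z : XA) : Prop := exists s, 0 <= s /\ z = g s.

Definition is_dist_to (Zs : XA -> Prop) (x : XA) (r : R) : Prop :=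
  (forall z, Zs z -> r <= dX x z) /\
  (forall eps, 0 < eps -> exists z, Zs z /\ dX x z < r + eps).

Definition proj_pt (Zs : XA -> Prop) (x p : XA) : Prop :=
  Zs p /\ exists r, is_dist_to Zs x r /\ dX x p = r.

Definition contracting (lam : R -> R) (Zs : XA -> Prop) : Prop :=
  exists c : R, forall x y : XA,
    (forall r, is_dist_to Zs x r -> dX x y <= r) ->
    forall p q, (proj_pt Zs x p \/ proj_pt Zs y p) ->
                (proj_pt Zs x q \/ proj_pt Zs y q) ->
                dX p q <= c * lam (nrm x).

Definition lim_infty_zero (f : R -> R) : Prop :=
  forall eps, 0 < eps -> exists M, forall t, M <= t -> Rabs (f t) < eps.

Definition admissible (lam : R -> R) : Prop :=
  (forall t, 0 <= t -> 1 <= lam t) /\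
  (forall s t, 0 <= s -> s <= t -> lam s <= lam t) /\
  (forall s t a, 0 <= s -> 0 <= t -> 0 <= a <= 1 ->
      a * lam s + (1 - a) * lam t <= lam (a * s + (1 - a) * t)) /\
  lim_infty_zero (fun t => lam t / t).

From Stdlib Require Import Reals Lra Lia ZArith List Classical ClassicalEpsilon.
Import ListNotations.
Open Scope R_scope.

(* Since k'/k -> 0, k' is monotone and k >= 1, there is C with
   k' <= C k on [0, oo) (dominated_of_ratio); hence every k'-contracting set
   is k-contracting (contracting_mono).  This part holds for any subset of X_A.

   For a gauge k we build the "staircase" geodesic ray
   stair_ray: it enters its j-th flat (the flat of the word prefix j) at time
   entry j, runs along the x-axis of that flat for the integer length
   seg j = floor (k (entry j)), and then climbs the g3-edge attached there into
   the next flat.  Exact distance formulas from an arbitrary point to the points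
   of the ray (dist_ray_before / within / after) show that the nearest-point
   projection of a point "hanging" from the j-th flat lies on the j-th segment or
   on the edge entering it.  Since such a point has norm >= entry j, projections
   of points which are close to each other have diameter <= seg j + 1 <= 2 k(|x|):
   the ray is k-contracting.  On the other hand the two points (0, -n) and (n, -n)
   of the j-th flat, n = seg j, are at distance n from each other and from the
   ray, and project onto the two ends of the segment; since
   k'(entry j + n) <= 2 k'(entry j) = o(n), the ray is not k'-contracting. *)

Lemma letter_eqb_refl (a : Letter) : letter_eqb a a = true.
Proof.
  destruct a as [[x y] b]; unfold letter_eqb; simpl.
  rewrite !Z.eqb_refl; destruct b; reflexivity.
Qed.

Lemma letter_eqb_false (a b : Letter) : a <> b -> letter_eqb a b = false.
Proof.
  destruct a as [[x y] e], b as [[x' y'] e']; intros H; unfold letter_eqb; simpl.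
  destruct (Z.eqb_spec x x'), (Z.eqb_spec y y'), e, e'; simpl; auto;
    subst; exfalso; apply H; reflexivity.
Qed.

Lemma letter_eqb_comm (a b : Letter) : letter_eqb a b = letter_eqb b a.
Proof.
  destruct a as [[x y] e], b as [[x' y'] e']; unfold letter_eqb; simpl.
  rewrite (Z.eqb_sym x), (Z.eqb_sym y); destruct e, e'; reflexivity.
Qed.

Lemma lcp_swap (a b : list Letter) :
  lcp_rest b a = (snd (lcp_rest a b), fst (lcp_rest a b)).
Proof.
  revert b; induction a as [|x a IH]; intros [|y b]; simpl; auto.
  rewrite letter_eqb_comm; destruct (letter_eqb x y); simpl; auto.
Qed.

Lemma lcp_app (p a b : list Letter) : lcp_rest (p ++ a) (p ++ b) = lcp_rest a b.
Proof. induction p; simpl; auto. rewrite letter_eqb_refl; auto. Qed.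

Lemma lcp_nil_r (a : list Letter) : lcp_rest a [] = (a, []).
Proof. destruct a; reflexivity. Qed.

Lemma dist2_sym (a b : R * R) : dist2 a b = dist2 b a.
Proof. destruct a as [a1 a2], b as [b1 b2]; unfold dist2, norm2; simpl; f_equal; ring. Qed.

Lemma norm2_nonneg (v : R * R) : 0 <= norm2 v.
Proof. apply sqrt_pos. Qed.

Lemma dist2_nonneg (a b : R * R) : 0 <= dist2 a b.
Proof. apply norm2_nonneg. Qed.

Lemma norm2_x0 (x : R) : norm2 (x, 0) = Rabs x.
Proof.
  unfold norm2; simpl. rewrite <- sqrt_Rsqr_abs. f_equal. unfold Rsqr; ring.
Qed.

Lemma dist2_x0 (a b : R) : dist2 (a, 0) (b, 0) = Rabs (a - b).
Proof. unfold dist2; simpl. replace (0 - 0) with 0 by ring. apply norm2_x0. Qed.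

Lemma dist2_0 (v : R * R) : dist2 v (0, 0) = norm2 v.
Proof. destruct v; unfold dist2; simpl; rewrite !Rminus_0_r; reflexivity. Qed.

Lemma dist2_vert (a n : R) : 0 <= n -> dist2 (a, - n) (a, 0) = n.
Proof.
  intros Hn; unfold dist2, norm2; simpl.
  replace ((a - a) * (a - a) + (- n - 0) * (- n - 0)) with (n * n) by ring.
  apply sqrt_square; auto.
Qed.

Lemma dist2_horiz (n : R) : 0 <= n -> dist2 (0, - n) (n, - n) = n.
Proof.
  intros Hn; unfold dist2, norm2; simpl.
  replace ((0 - n) * (0 - n) + (- n - - n) * (- n - - n)) with (n * n) by ring.
  apply sqrt_square; auto.
Qed.

Lemma pdist_sym (p q : Pt) : pdist p q = pdist q p.
Proof.
  unfold pdist; cbv zeta. rewrite (lcp_swap (full q) (full p)).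
  destruct p, q; simpl full; destruct (lcp_rest _ _) as [a b]; simpl;
    destruct a, b; simpl; try rewrite dist2_sym; try ring; apply Rabs_minus_sym.
Qed.

(* The length of the path through the origins and attaching points of a
   sequence of flats: each letter costs its g3-edge and the horizontal run to
   its attaching point. *)
Definition cost (L : list Letter) : R :=
  fold_right (fun l acc => 1 + norm2 (hR l) + acc) 0 L.

Lemma cost_nonneg (L : list Letter) : 0 <= cost L.
Proof. induction L; simpl; [lra|]. pose proof (norm2_nonneg (hR a)); lra. Qed.

Lemma cost_app (A B : list Letter) : cost (A ++ B) = cost A + cost B.
Proof. induction A; simpl; [ring|]. rewrite IHA; ring. Qed.

Lemma climb_cost (s : list Letter) : climb s = cost (tl s).
Proof. reflexivity. Qed.

Lemma u_up_pos (p : Pt) : valid_pt p -> 0 < u_up p.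
Proof. destruct p as [c x y|c l t]; simpl; intros; [pose proof (norm2_nonneg (x, y))|]; lra. Qed.

Lemma pos_off_nonneg (p : Pt) (s : list Letter) : valid_pt p -> 0 <= snd (pos_off p s).
Proof.
  intros Hp; destruct s as [|l s]; simpl.
  - destruct p; simpl in *; lra.
  - pose proof (u_up_pos p Hp); pose proof (cost_nonneg s); rewrite climb_cost; simpl; lra.
Qed.

Lemma nrm_nonneg (x : XA) : 0 <= nrm x.
Proof.
  destruct x as [p Hp]; unfold nrm, dX, pdist; simpl.
  pose proof (dist2_nonneg (0, 0) (fst (pos_off p (full p)))).
  pose proof (pos_off_nonneg p (full p) Hp).
  destruct p; simpl in *; lra.
Qed.

Definition is_edge_pt (p : Pt) : Prop := match p with EP _ _ _ => True | _ => False end.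

(* Unless both points lie on one common g3-edge, the distance is the length
   of the path through the entry points into the deepest common flat. *)
Lemma pdist_generic (p q : Pt) (A B : list Letter) :
  lcp_rest (full p) (full q) = (A, B) ->
  ~ (A = [] /\ B = [] /\ is_edge_pt p /\ is_edge_pt q) ->
  pdist p q = snd (pos_off p A) + dist2 (fst (pos_off p A)) (fst (pos_off q B))
              + snd (pos_off q B).
Proof.
  intros E H; unfold pdist; cbv zeta; rewrite E; simpl.
  destruct p, q; simpl in H; auto.
  destruct A; auto. destruct B; auto. exfalso; tauto.
Qed.

Lemma pdist_same_edge (c1 c2 : list Letter) (l1 l2 : Letter) (t1 t2 : R) :
  lcp_rest (c1 ++ [l1]) (c2 ++ [l2]) = ([], []) ->
  pdist (EP c1 l1 t1) (EP c2 l2 t2) = Rabs (t1 - t2).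
Proof. intros H; unfold pdist; cbv zeta; simpl full; rewrite H; reflexivity. Qed.

Lemma dist_unique (Zs : XA -> Prop) (x : XA) (r1 r2 : R) :
  is_dist_to Zs x r1 -> is_dist_to Zs x r2 -> r1 = r2.
Proof.
  intros [A1 B1] [A2 B2].
  destruct (Rtotal_order r1 r2) as [L|[E|L]]; auto; exfalso.
  - destruct (B1 (r2 - r1) ltac:(lra)) as [z [Hz Hd]]. pose proof (A2 z Hz); lra.
  - destruct (B2 (r1 - r2) ltac:(lra)) as [z [Hz Hd]]. pose proof (A1 z Hz); lra.
Qed.

Lemma ratio_lt (a b eps : R) : 0 < b -> Rabs (a / b) < eps -> a < eps * b.
Proof.
  intros Hb H. pose proof (Rle_abs (a / b)).
  replace a with ((a / b) * b) by (field; lra). apply Rmult_lt_compat_r; lra.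
Qed.

(* If k'/k -> 0 with k >= 1 and k' monotone, then k' <= C k on [0, oo):
   for large t by the limit, for small t by monotonicity of k'. *)
Lemma dominated_of_ratio (k k' : R -> R) :
  (forall t, 0 <= t -> 1 <= k t) ->
  (forall s t, 0 <= s -> s <= t -> k' s <= k' t) ->
  lim_infty_zero (fun t => k' t / k t) ->
  exists C, 0 <= C /\ forall t, 0 <= t -> k' t <= C * k t.
Proof.
  intros Hk1 Hkm' Hl.
  destruct (Hl 1 ltac:(lra)) as [M1 HM1].
  set (M := Rmax 0 M1); set (C := Rmax 1 (k' M)).
  assert (HM : 0 <= M) by apply Rmax_l.
  assert (HC : 1 <= C) by apply Rmax_l.
  exists C; split; [lra|]. intros t Ht.
  pose proof (Hk1 t Ht) as Hkt.
  assert (Hkt_le : k t <= C * k t) by (rewrite <- (Rmult_1_l (k t)) at 1; apply Rmult_le_compat_r; lra).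
  assert (HC_le : C <= C * k t) by (rewrite <- (Rmult_1_r C) at 1; apply Rmult_le_compat_l; lra).
  destruct (Rle_dec M t) as [HMt|HMt].
  - assert (HM1t : M1 <= t) by (pose proof (Rmax_r 0 M1) as HM1M; fold M in HM1M; lra).
    pose proof (ratio_lt (k' t) (k t) 1 ltac:(lra) (HM1 t HM1t)); lra.
  - pose proof (Hkm' t M Ht ltac:(lra)).
    pose proof (Rmax_r 1 (k' M)) as HkC; fold C in HkC; lra.
Qed.

Lemma contracting_mono (k k' : R -> R) (Zs : XA -> Prop) :
  admissible k -> admissible k' -> lim_infty_zero (fun t => k' t / k t) ->
  contracting k' Zs -> contracting k Zs.
Proof.
  intros [Hk1 _] [Hk1' [Hkm' _]] Hl [c Hc].
  destruct (dominated_of_ratio k k' Hk1 Hkm' Hl) as [C [HC HCb]].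
  exists (Rabs c * C). intros x y Hxy p q Hp Hq.
  pose proof (Hc x y Hxy p q Hp Hq) as Hpq.
  pose proof (nrm_nonneg x) as Hx.
  pose proof (HCb _ Hx). pose proof (Hk1' _ Hx).
  pose proof (Rle_abs c). pose proof (Rabs_pos c).
  assert (c * k' (nrm x) <= Rabs c * k' (nrm x)) by (apply Rmult_le_compat_r; lra).
  assert (Rabs c * k' (nrm x) <= Rabs c * (C * k (nrm x))) by (apply Rmult_le_compat_l; lra).
  lra.
Qed.

Lemma concave_double (f : R -> R) (t : R) :
  (forall s t a, 0 <= s -> 0 <= t -> 0 <= a <= 1 ->
      a * f s + (1 - a) * f t <= f (a * s + (1 - a) * t)) ->
  0 <= f 0 -> 0 <= t -> f (2 * t) <= 2 * f t.
Proof.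
  intros Hconc Hf0 Ht.
  pose proof (Hconc (2 * t) 0 (/ 2) ltac:(lra) ltac:(lra) ltac:(lra)) as H.
  replace (/ 2 * (2 * t) + (1 - / 2) * 0) with t in H by field. lra.
Qed.

Section Staircase.

Variable k : R -> R.

(* The staircase ray spends the time interval [entry j, entry (S j)) in its
   j-th flat, prefix j: a horizontal run of length seg j along the x-axis,
   followed by the g3-edge (labelled exit_letter j) into flat j+1. *)
Definition seg_nat (t : R) : nat := Z.to_nat (Int_part (k t)).

Fixpoint entry (j : nat) : R :=
  match j with O => 0 | S j' => entry j' + INR (seg_nat (entry j')) + 1 end.

Definition seg (j : nat) : R := INR (seg_nat (entry j)).

Definition exit_letter (j : nat) : Letter := ((Z.of_nat (seg_nat (entry j)), 0%Z), true).

(* The letters of flats a, ..., a + b - 1; prefix j is the word of flat j. *)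
Definition turns (a b : nat) : list Letter := map exit_letter (seq a b).

Definition prefix (j : nat) : list Letter := turns 0 j.

Lemma seg_nat_floor (t : R) : 1 <= k t -> k t - 1 < INR (seg_nat t) <= k t.
Proof.
  intros H; unfold seg_nat. destruct (base_Int_part (k t)) as [Hlo Hhi].
  assert (0 <= Int_part (k t))%Z by (apply le_IZR; simpl; lra).
  rewrite INR_IZR_INZ, Z2Nat.id by auto; lra.
Qed.

Lemma entry_S (j : nat) : entry (S j) = entry j + seg j + 1.
Proof. reflexivity. Qed.

Lemma seg_nonneg (j : nat) : 0 <= seg j.
Proof. apply pos_INR. Qed.

Lemma entry_ge_index (j : nat) : INR j <= entry j.
Proof.
  induction j; simpl entry; [simpl; lra|].
  rewrite S_INR. pose proof (pos_INR (seg_nat (entry j))); lra.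
Qed.

Lemma entry_nonneg (j : nat) : 0 <= entry j.
Proof. pose proof (entry_ge_index j); pose proof (pos_INR j); lra. Qed.

Lemma entry_S_ge1 (m : nat) : 1 <= entry (S m).
Proof. rewrite entry_S; pose proof (entry_nonneg m); pose proof (seg_nonneg m); lra. Qed.

Lemma entry_mono (i j : nat) : (i <= j)%nat -> entry i <= entry j.
Proof. intros H; induction H; [lra|]. rewrite entry_S; pose proof (seg_nonneg m); lra. Qed.

Lemma entry_lt (i j : nat) : (i < j)%nat -> entry (S i) <= entry j.
Proof. intros; apply entry_mono; lia. Qed.

(* Since every step takes time at least 1, the ray visits infinitely many flats. *)
Lemma entry_unbounded (M : R) : exists J, (1 <= J)%nat /\ M <= entry J.
Proof.
  exists (S (Z.to_nat (up M))); split; [lia|].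
  pose proof (entry_ge_index (S (Z.to_nat (up M)))) as HJ; rewrite S_INR in HJ.
  destruct (archimed M) as [HupM _].
  assert (IZR (up M) <= INR (Z.to_nat (up M))).
  { destruct (Z_le_gt_dec 0 (up M)) as [Hp|Hn].
    - rewrite INR_IZR_INZ, Z2Nat.id by exact Hp; lra.
    - pose proof (pos_INR (Z.to_nat (up M))). apply Z.gt_lt, IZR_lt in Hn; lra. }
  lra.
Qed.

Lemma turns_S (a b : nat) : turns a (S b) = exit_letter a :: turns (S a) b.
Proof. reflexivity. Qed.

Lemma turns_app (a b c : nat) : turns a (b + c) = turns a b ++ turns (a + b) c.
Proof. unfold turns; rewrite seq_app, map_app; reflexivity. Qed.

Lemma prefix_split (m J : nat) : (m <= J)%nat -> prefix J = prefix m ++ turns m (J - m).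
Proof.
  intros H; unfold prefix. replace J with (m + (J - m))%nat at 1 by lia.
  rewrite turns_app; reflexivity.
Qed.

Lemma prefix_S (j : nat) : prefix (S j) = prefix j ++ [exit_letter j].
Proof. unfold prefix. replace (S j) with (j + 1)%nat by lia. rewrite turns_app; reflexivity. Qed.

Lemma hR_exit_letter (j : nat) : hR (exit_letter j) = (seg j, 0).
Proof. unfold hR, exit_letter, seg; simpl. rewrite <- INR_IZR_INZ; reflexivity. Qed.

Lemma cost_turns (b a : nat) : cost (turns a b) = entry (a + b) - entry a.
Proof.
  revert a; induction b; intros a.
  - simpl. rewrite Nat.add_0_r; ring.
  - rewrite turns_S; simpl cost. fold (cost (turns (S a) b)).
    rewrite IHb, hR_exit_letter, norm2_x0, Rabs_right by (apply Rle_ge, seg_nonneg).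
    replace (S a + b)%nat with (a + S b)%nat by lia. rewrite entry_S; ring.
Qed.

Lemma valid_from_turns (l : Letter) (b a : nat) : snd l = true -> valid_from l (turns a b).
Proof.
  revert l a; induction b; intros l a Hl; simpl; auto.
  split; [intros _; rewrite Hl; reflexivity|]. apply IHb; reflexivity.
Qed.

Lemma valid_prefix (j : nat) : valid_word (prefix j).
Proof.
  destruct j as [|j]; [simpl; auto|].
  unfold prefix; rewrite turns_S; simpl. apply valid_from_turns; reflexivity.
Qed.

Definition stair_pt (j : nat) (u : R) : Pt :=
  if Rle_dec u (seg j) then FP (prefix j) u 0
  else EP (prefix j) (exit_letter j) (u - seg j).

Definition flat_index (s : R) : nat :=
  epsilon (inhabits 0%nat) (fun j => entry j <= s < entry (S j)).

Lemma flat_index_exists (s : R) : 0 <= s -> exists j, entry j <= s < entry (S j).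
Proof.
  intros Hs.
  assert (Hbelow : forall N, s < entry N -> exists j, entry j <= s < entry (S j)).
  { induction N; intros HN; simpl in HN; [lra|].
    destruct (Rlt_dec s (entry N)); auto. exists N; simpl; lra. }
  destruct (entry_unbounded (s + 1)) as [J [_ HJ]]. apply (Hbelow J); lra.
Qed.

Lemma flat_index_unique (i j : nat) (s : R) :
  entry i <= s < entry (S i) -> entry j <= s < entry (S j) -> i = j.
Proof.
  intros Hi Hj. destruct (Nat.lt_trichotomy i j) as [H|[H|H]]; auto.
  - pose proof (entry_lt i j H); lra.
  - pose proof (entry_lt j i H); lra.
Qed.

Lemma flat_index_spec (s : R) : 0 <= s -> entry (flat_index s) <= s < entry (S (flat_index s)).
Proof. intros; unfold flat_index; apply epsilon_spec, flat_index_exists; auto. Qed.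

Definition ray_pt (s : R) : Pt :=
  if Rle_dec 0 s then stair_pt (flat_index s) (s - entry (flat_index s)) else o_pt.

Lemma stair_pt_valid (j : nat) (u : R) : 0 <= u < seg j + 1 -> valid_pt (stair_pt j u).
Proof.
  intros H; unfold stair_pt. destruct (Rle_dec u (seg j)); simpl.
  - apply valid_prefix.
  - split; [rewrite <- prefix_S; apply valid_prefix | lra].
Qed.

Lemma ray_pt_valid (s : R) : valid_pt (ray_pt s).
Proof.
  unfold ray_pt. destruct (Rle_dec 0 s) as [Hs|]; [|exact I].
  apply stair_pt_valid. pose proof (flat_index_spec s Hs) as H; rewrite entry_S in H; lra.
Qed.

Definition stair_ray (s : R) : XA := exist valid_pt (ray_pt s) (ray_pt_valid s).

Lemma ray_pt_at (j : nat) (u : R) : 0 <= u < seg j + 1 -> ray_pt (entry j + u) = stair_pt j u.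
Proof.
  intros H; unfold ray_pt. pose proof (entry_nonneg j).
  destruct (Rle_dec 0 (entry j + u)); [|lra].
  assert (E : flat_index (entry j + u) = j).
  { apply (flat_index_unique _ _ (entry j + u)); [apply flat_index_spec; lra|].
    rewrite entry_S; lra. }
  rewrite E; f_equal; ring.
Qed.

Lemma ray_pt_form (s : R) : 0 <= s ->
  exists j u, s = entry j + u /\ 0 <= u < seg j + 1 /\ ray_pt s = stair_pt j u.
Proof.
  intros Hs. exists (flat_index s), (s - entry (flat_index s)).
  pose proof (flat_index_spec s Hs) as H; rewrite entry_S in H.
  split; [ring|split; [lra|]].
  unfold ray_pt. destruct (Rle_dec 0 s); [reflexivity|lra].
Qed.

Lemma ray_pt_0 : ray_pt 0 = o_pt.
Proof.
  pose proof (seg_nonneg 0).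
  replace 0 with (entry 0 + 0) by (simpl; ring). rewrite ray_pt_at by lra.
  unfold stair_pt. destruct (Rle_dec 0 (seg 0)); [reflexivity|lra].
Qed.

(* Every word is prefix J ++ rest where rest does not continue along the ray;
   such a point "hangs" from flat J of the ray. *)
Definition leaves_ray (J : nat) (rest : list Letter) : Prop :=
  forall l r, rest = l :: r -> l <> exit_letter J.

Lemma split_turns (f : list Letter) (m : nat) :
  exists J rest, f = turns m J ++ rest /\ leaves_ray (m + J) rest.
Proof.
  revert m; induction f as [|a f IH]; intros m.
  - exists 0%nat, []. split; [reflexivity|]. intros l r H; discriminate.
  - destruct (classic (a = exit_letter m)) as [E|E].
    + destruct (IH (S m)) as [J [rest [Hf Hleave]]]. exists (S J), rest.
      split; [rewrite turns_S; simpl; rewrite E, Hf; reflexivity|].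
      replace (m + S J)%nat with (S m + J)%nat by lia; auto.
    + exists 0%nat, (a :: f). split; [reflexivity|].
      intros l r H; inversion H; subst. rewrite Nat.add_0_r; auto.
Qed.

Lemma split_along_ray (f : list Letter) :
  exists J rest, f = prefix J ++ rest /\ leaves_ray J rest.
Proof. apply (split_turns f 0). Qed.

Lemma lcp_prefix_below (J m : nat) (rest : list Letter) : (m <= J)%nat ->
  lcp_rest (prefix J ++ rest) (prefix m) = (turns m (J - m) ++ rest, []).
Proof.
  intros H. rewrite (prefix_split m J H), <- app_assoc.
  rewrite <- (app_nil_r (prefix m)) at 2. rewrite lcp_app. apply lcp_nil_r.
Qed.

Lemma lcp_prefix_cross (J J' : nat) (rest rest' : list Letter) :
  (J < J')%nat -> leaves_ray J rest ->
  lcp_rest (prefix J ++ rest) (prefix J' ++ rest') = (rest, turns J (J' - J) ++ rest').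
Proof.
  intros H Hleave. rewrite (prefix_split J J') by lia. rewrite <- app_assoc, lcp_app.
  replace (J' - J)%nat with (S (J' - J - 1)) by lia. rewrite turns_S; simpl.
  destruct rest as [|l r]; [reflexivity|]; simpl.
  rewrite letter_eqb_false; [reflexivity|]. apply (Hleave l r); reflexivity.
Qed.

Lemma lcp_prefix_above (J m : nat) (rest : list Letter) : (J < m)%nat -> leaves_ray J rest ->
  lcp_rest (prefix J ++ rest) (prefix m) = (rest, turns J (m - J)).
Proof.
  intros H Hleave. rewrite <- (app_nil_r (prefix m)), lcp_prefix_cross by auto.
  rewrite app_nil_r; reflexivity.
Qed.

(* The length of the climb from x back up to the origin of flat J, for
   full x = prefix J ++ rest. *)
Definition ascent (x : Pt) (rest : list Letter) : R := u_up x + cost rest.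

(* x does not lie on a g3-edge leaving flat J itself. *)
Definition not_bare_edge (x : Pt) (rest : list Letter) : Prop :=
  ~ (rest = [] /\ is_edge_pt x).

Lemma ascent_split (x : Pt) (rest : list Letter) : not_bare_edge x rest ->
  ascent x rest = snd (pos_off x rest) + dist2 (fst (pos_off x rest)) (0, 0) + 1.
Proof.
  intros G; destruct rest as [|l r]; rewrite dist2_0; unfold ascent.
  - destruct x; simpl in *; [ring|exfalso; apply G; split; [reflexivity|exact I]].
  - simpl. rewrite climb_cost; simpl; ring.
Qed.

Lemma full_exit_edge (m : nat) (t : R) : full (EP (prefix m) (exit_letter m) t) = prefix (S m).
Proof. simpl; rewrite prefix_S; reflexivity. Qed.

(* Distances from a point x hanging from flat J to a point of the ray in an
   earlier flat m < J: go up to the origin of flat J, then back along the ray. *)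
Lemma dist_flat_below (x : Pt) (J : nat) (rest : list Letter) (m : nat) (a : R) :
  full x = prefix J ++ rest -> (m < J)%nat -> 0 <= a <= seg m ->
  pdist x (FP (prefix m) a 0) = ascent x rest + entry J - 1 - (entry m + a).
Proof.
  intros Hf Hm Ha.
  rewrite (pdist_generic x _ (turns m (J - m) ++ rest) []).
  2:{ rewrite Hf. apply lcp_prefix_below; lia. }
  2:{ simpl; tauto. }
  replace (J - m)%nat with (S (J - S m)) by lia. rewrite turns_S; simpl.
  rewrite climb_cost; simpl. rewrite cost_app, cost_turns, hR_exit_letter, dist2_x0.
  replace (S m + (J - S m))%nat with J by lia. rewrite Rabs_right by lra.
  unfold ascent; rewrite entry_S; ring.
Qed.

Lemma dist_edge_below (x : Pt) (J : nat) (rest : list Letter) (m : nat) (t : R) :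
  full x = prefix J ++ rest -> (S m < J)%nat ->
  pdist x (EP (prefix m) (exit_letter m) t) = ascent x rest + entry J - 1 - (entry m + seg m + t).
Proof.
  intros Hf Hm.
  rewrite (pdist_generic x _ (turns (S m) (J - S m) ++ rest) []).
  2:{ rewrite Hf, full_exit_edge. apply lcp_prefix_below; lia. }
  2:{ intros [H _]. destruct (J - S m)%nat eqn:E; [lia|discriminate]. }
  replace (J - S m)%nat with (S (J - S (S m))) by lia. rewrite turns_S; simpl.
  rewrite climb_cost; simpl. rewrite cost_app, cost_turns, hR_exit_letter.
  replace (S (S m) + (J - S (S m)))%nat with J by lia.
  rewrite dist2_0, norm2_x0, Rabs_right by (apply Rle_ge, seg_nonneg).
  unfold ascent, seg; simpl entry; ring.
Qed.

Lemma dist_exit_edge_from_above (x : Pt) (J : nat) (rest : list Letter) (m : nat) (t : R) :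
  full x = prefix J ++ rest -> J = S m -> not_bare_edge x rest ->
  pdist x (EP (prefix m) (exit_letter m) t) = ascent x rest - t.
Proof.
  intros Hf HJ G.
  rewrite (pdist_generic x _ rest []).
  2:{ rewrite Hf, full_exit_edge, <- HJ.
      rewrite <- (app_nil_r (prefix J)) at 2.
      rewrite lcp_app; apply lcp_nil_r. }
  2:{ intros [Hr [_ [He _]]]. apply G; auto. }
  rewrite ascent_split by auto; simpl; ring.
Qed.

Lemma dist_exit_edge_from_edge (c : list Letter) (l : Letter) (tx : R) (J m : nat) (t : R) :
  c ++ [l] = prefix J -> J = S m ->
  pdist (EP c l tx) (EP (prefix m) (exit_letter m) t) = Rabs (tx - t).
Proof.
  intros Hc HJ. apply pdist_same_edge. rewrite Hc, <- prefix_S, <- HJ.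
  rewrite <- (app_nil_r (prefix J)), lcp_app; reflexivity.
Qed.

Lemma dist_same_flat (x : Pt) (J : nat) (rest : list Letter) (a : R) :
  full x = prefix J ++ rest ->
  pdist x (FP (prefix J) a 0) = snd (pos_off x rest) + dist2 (fst (pos_off x rest)) (a, 0).
Proof.
  intros Hf.
  rewrite (pdist_generic x _ rest []).
  2:{ rewrite Hf. change (full (FP (prefix J) a 0)) with (prefix J).
      rewrite <- (app_nil_r (prefix J)) at 2. rewrite lcp_app; apply lcp_nil_r. }
  2:{ simpl; tauto. }
  simpl; ring.
Qed.

(* Points of the ray after flat J: go to the exit point (seg J, 0) of flat J,
   then along the ray. *)
Lemma dist_exit_edge (x : Pt) (J : nat) (rest : list Letter) (t : R) :
  full x = prefix J ++ rest -> leaves_ray J rest ->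
  pdist x (EP (prefix J) (exit_letter J) t) =
  snd (pos_off x rest) + dist2 (fst (pos_off x rest)) (seg J, 0) + t.
Proof.
  intros Hf Hleave.
  rewrite (pdist_generic x _ rest (turns J 1)).
  2:{ rewrite Hf, full_exit_edge. replace 1%nat with (S J - J)%nat by lia.
      apply lcp_prefix_above; auto. }
  2:{ intros [_ [H _]]; discriminate. }
  simpl. rewrite hR_exit_letter. change (climb (turns J 1)) with 0. ring.
Qed.

Lemma dist_flat_above (x : Pt) (J : nat) (rest : list Letter) (m : nat) (a : R) :
  full x = prefix J ++ rest -> leaves_ray J rest -> (J < m)%nat -> 0 <= a ->
  pdist x (FP (prefix m) a 0) =
  snd (pos_off x rest) + dist2 (fst (pos_off x rest)) (seg J, 0) + (a + 1 + entry m - entry (S J)).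
Proof.
  intros Hf Hleave Hm Ha.
  rewrite (pdist_generic x _ rest (turns J (m - J))).
  2:{ rewrite Hf. apply lcp_prefix_above; auto. }
  2:{ simpl; tauto. }
  replace (m - J)%nat with (S (m - S J)) by lia. rewrite turns_S; simpl.
  rewrite climb_cost; simpl. rewrite cost_turns, hR_exit_letter, norm2_x0, Rabs_right by lra.
  replace (S J + (m - S J))%nat with m by lia. unfold seg; simpl entry; ring.
Qed.

Lemma dist_edge_above (x : Pt) (J : nat) (rest : list Letter) (m : nat) (t : R) :
  full x = prefix J ++ rest -> leaves_ray J rest -> (J < m)%nat ->
  pdist x (EP (prefix m) (exit_letter m) t) =
  snd (pos_off x rest) + dist2 (fst (pos_off x rest)) (seg J, 0) + (t + entry (S m) - entry (S J)).
Proof.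
  intros Hf Hleave Hm.
  rewrite (pdist_generic x _ rest (turns J (S m - J))).
  2:{ rewrite Hf, full_exit_edge. apply lcp_prefix_above; auto. }
  2:{ replace (S m - J)%nat with (S (m - J)) by lia. intros [_ [H _]]; discriminate. }
  replace (S m - J)%nat with (S (m - J)) by lia. rewrite turns_S; simpl.
  rewrite climb_cost; simpl. rewrite cost_turns, hR_exit_letter.
  replace (S J + (m - J))%nat with (S m) by lia. unfold seg; simpl entry; ring.
Qed.

Lemma index_lt_of_before (j J : nat) (u s : R) :
  s = entry j + u -> 0 <= u -> s < entry J -> (j < J)%nat.
Proof.
  intros Es Hu Hs. destruct (Nat.lt_ge_cases j J) as [|HJj]; auto.
  pose proof (entry_mono J j HJj); lra.
Qed.

(* Before flat J the ray is a geodesic towards x. *)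
Lemma dist_ray_before (x : Pt) (J : nat) (rest : list Letter) (s : R) :
  full x = prefix J ++ rest -> not_bare_edge x rest -> 0 <= s -> s < entry J ->
  pdist x (ray_pt s) = ascent x rest + entry J - 1 - s.
Proof.
  intros Hf G Hs Hlt.
  destruct (ray_pt_form s Hs) as [j [u [Es [Hu Eray]]]]. rewrite Eray.
  pose proof (index_lt_of_before j J u s Es (proj1 Hu) Hlt) as HjJ.
  unfold stair_pt. destruct (Rle_dec u (seg j)).
  - rewrite (dist_flat_below x J rest j u); auto; [rewrite Es; ring|lra].
  - destruct (Nat.lt_ge_cases (S j) J).
    + rewrite (dist_edge_below x J rest j); auto. rewrite Es; ring.
    + rewrite (dist_exit_edge_from_above x J rest j _ Hf) by (auto; lia).
      replace J with (S j) by lia. rewrite entry_S, Es; ring.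
Qed.

Lemma dist_ray_before_from_edge (c : list Letter) (l : Letter) (tx : R) (J : nat) (s : R) :
  valid_pt (EP c l tx) -> c ++ [l] = prefix J -> 0 <= s -> s < entry J ->
  pdist (EP c l tx) (ray_pt s) = Rabs (entry J - 1 + tx - s).
Proof.
  intros Hv Hc Hs Hlt. simpl in Hv.
  assert (Hf : full (EP c l tx) = prefix J ++ []) by (simpl; rewrite app_nil_r; auto).
  destruct (ray_pt_form s Hs) as [j [u [Es [Hu Eray]]]]. rewrite Eray.
  pose proof (index_lt_of_before j J u s Es (proj1 Hu) Hlt) as HjJ.
  pose proof (entry_lt j J HjJ) as Hent; rewrite entry_S in Hent.
  unfold stair_pt. destruct (Rle_dec u (seg j)).
  - rewrite (dist_flat_below _ J [] j u); auto; [|lra]. unfold ascent; simpl.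
    rewrite Rabs_right; [rewrite Es; ring|lra].
  - destruct (Nat.lt_ge_cases (S j) J) as [HSj|HSj].
    + rewrite (dist_edge_below _ J [] j); auto. unfold ascent; simpl.
      pose proof (entry_lt (S j) J HSj) as Hent'; rewrite !entry_S in Hent'.
      pose proof (seg_nonneg (S j)).
      rewrite Rabs_right; [rewrite Es; ring|lra].
    + rewrite (dist_exit_edge_from_edge c l tx J j) by (auto; lia).
      f_equal. replace J with (S j) by lia. rewrite entry_S, Es; ring.
Qed.

Lemma dist_ray_within (x : Pt) (J : nat) (rest : list Letter) (s : R) :
  full x = prefix J ++ rest -> entry J <= s <= entry J + seg J ->
  pdist x (ray_pt s) = snd (pos_off x rest) + dist2 (fst (pos_off x rest)) (s - entry J, 0).
Proof.
  intros Hf Hs.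
  replace s with (entry J + (s - entry J)) at 1 by ring.
  rewrite ray_pt_at by lra. unfold stair_pt.
  destruct (Rle_dec (s - entry J) (seg J)); [|lra].
  apply dist_same_flat; auto.
Qed.

(* After flat J the ray is a geodesic away from x, through (seg J, 0). *)
Lemma dist_ray_after (x : Pt) (J : nat) (rest : list Letter) (s : R) :
  full x = prefix J ++ rest -> leaves_ray J rest -> entry J + seg J < s ->
  pdist x (ray_pt s) = snd (pos_off x rest) + dist2 (fst (pos_off x rest)) (seg J, 0)
                       + (s - entry J - seg J).
Proof.
  intros Hf Hleave Hs.
  assert (Hs0 : 0 <= s) by (pose proof (entry_nonneg J); pose proof (seg_nonneg J); lra).
  destruct (ray_pt_form s Hs0) as [j [u [Es [Hu Eray]]]]. rewrite Eray.
  assert (HjJ : (J <= j)%nat).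
  { destruct (Nat.lt_ge_cases j J) as [Hj|]; auto.
    pose proof (entry_lt j J Hj) as Hent; rewrite entry_S in Hent.
    pose proof (seg_nonneg J); lra. }
  unfold stair_pt. destruct (Rle_dec u (seg j)); destruct (Nat.eq_dec j J).
  - subst; lra.
  - rewrite (dist_flat_above x J rest j u); auto; [|lia|lra]. rewrite entry_S, Es; ring.
  - subst. rewrite (dist_exit_edge x J rest); auto; ring.
  - rewrite (dist_edge_above x J rest j); auto; [|lia]. rewrite !entry_S, Es; ring.
Qed.

Lemma dist_ray_from_flat_pt (J : nat) (a s : R) : 0 <= a <= seg J -> 0 <= s ->
  pdist (FP (prefix J) a 0) (ray_pt s) = Rabs (entry J + a - s).
Proof.
  intros Ha Hs.
  assert (Hf : full (FP (prefix J) a 0) = prefix J ++ []) by (simpl; rewrite app_nil_r; auto).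
  destruct (Rlt_dec s (entry J)); [|destruct (Rle_dec s (entry J + seg J))].
  - rewrite (dist_ray_before _ J []) by (auto; intros [_ H]; exact H).
    unfold ascent; simpl. rewrite norm2_x0, !Rabs_right by lra; ring.
  - rewrite (dist_ray_within _ J []) by (auto; lra); simpl.
    rewrite dist2_x0, Rplus_0_l; f_equal; ring.
  - rewrite (dist_ray_after _ J []) by (auto; try lra; intros l1 r1 H1; discriminate); simpl.
    rewrite dist2_x0, !Rabs_left1 by lra; ring.
Qed.

Lemma dist_ray_from_edge_pt (c : list Letter) (l : Letter) (tx : R) (J : nat) (s : R) :
  valid_pt (EP c l tx) -> c ++ [l] = prefix J -> 0 <= s ->
  pdist (EP c l tx) (ray_pt s) = Rabs (entry J - 1 + tx - s).
Proof.
  intros Hv Hc Hs.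
  assert (Hf : full (EP c l tx) = prefix J ++ []) by (simpl; rewrite app_nil_r; auto).
  pose proof (seg_nonneg J). simpl in Hv.
  destruct (Rlt_dec s (entry J)); [|destruct (Rle_dec s (entry J + seg J))].
  - apply dist_ray_before_from_edge; auto.
  - rewrite (dist_ray_within _ J []) by (auto; lra); simpl.
    rewrite dist2_x0, !Rabs_left1 by lra; ring.
  - rewrite (dist_ray_after _ J []) by (auto; try lra; intros l1 r1 H1; discriminate); simpl.
    rewrite dist2_x0, !Rabs_left1 by lra; ring.
Qed.

Lemma ray_pt_dist (s t : R) : 0 <= s -> 0 <= t -> pdist (ray_pt s) (ray_pt t) = Rabs (s - t).
Proof.
  intros Hs Ht.
  destruct (ray_pt_form s Hs) as [j [u [Es [Hu Eray]]]]. rewrite Eray. unfold stair_pt.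
  destruct (Rle_dec u (seg j)).
  - rewrite dist_ray_from_flat_pt by (auto; lra). rewrite Es; reflexivity.
  - rewrite (dist_ray_from_edge_pt _ _ _ (S j)); auto.
    + f_equal. rewrite entry_S, Es; ring.
    + simpl. split; [rewrite <- prefix_S; apply valid_prefix|lra].
    + rewrite prefix_S; reflexivity.
Qed.

Lemma stair_ray_geodesic : geodesic_ray stair_ray.
Proof.
  split; [apply ray_pt_0|].
  intros s t Hs Ht. unfold dX; simpl. apply ray_pt_dist; auto.
Qed.

(* y is the ray point at time sy, which lies in the stay of the ray in flat J
   (possibly on the edge entering it). *)
Definition on_ray_at (y : Pt) (J : nat) (sy : R) : Prop :=
  0 <= sy /\ ray_pt sy = y /\ entry J - 1 <= sy <= entry J + seg J /\
  forall s, 0 <= s -> pdist y (ray_pt s) = Rabs (sy - s).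

Definition off_ray (x : Pt) (J : nat) (rest : list Letter) : Prop :=
  not_bare_edge x rest /\
  ~ (rest = [] /\ exists a, x = FP (prefix J) a 0 /\ 0 <= a <= seg J).

Lemma on_or_off_ray (y : Pt) : valid_pt y -> exists J rest,
  full y = prefix J ++ rest /\ leaves_ray J rest /\
  ((exists sy, on_ray_at y J sy) \/ off_ray y J rest).
Proof.
  intros Hv. destruct (split_along_ray (full y)) as [J [rest [Hf Hleave]]].
  exists J, rest. split; auto. split; auto.
  destruct rest as [|l0 r0].
  2:{ right. split; intros [E _]; discriminate. }
  rewrite app_nil_r in Hf.
  destruct y as [c a b|c l t]; simpl in Hf, Hv.
  - subst c. destruct (classic (b = 0 /\ 0 <= a <= seg J)) as [[Hb Ha]|N].
    + left. subst b. exists (entry J + a). pose proof (entry_nonneg J).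
      split; [lra|]. split.
      { rewrite ray_pt_at by lra. unfold stair_pt; destruct Rle_dec; [reflexivity|lra]. }
      split; [lra|]. intros s Hs. apply dist_ray_from_flat_pt; auto.
    + right. split; [intros [_ E]; exact E|].
      intros [_ [a' [E Ha']]]. injection E; intros; subst. apply N; auto.
  - destruct J as [|m]; [destruct c; discriminate|].
    rewrite prefix_S in Hf. apply app_inj_tail in Hf. destruct Hf as [Hc Hl]; subst c l.
    left. exists (entry (S m) - 1 + t).
    pose proof (entry_S_ge1 m). pose proof (seg_nonneg m). pose proof (seg_nonneg (S m)).
    split; [lra|]. split.
    { replace (entry (S m) - 1 + t) with (entry m + (seg m + t)) by (rewrite entry_S; ring).
      rewrite ray_pt_at by lra. unfold stair_pt. destruct Rle_dec; [lra|]. f_equal; ring. }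
    split; [lra|]. intros s Hs. apply dist_ray_from_edge_pt; auto. rewrite prefix_S; reflexivity.
Qed.

(* The nearest point of the j-th segment to a planar point e has abscissa
   clamp J e. *)
Definition clamp (J : nat) (e : R * R) : R := Rmax 0 (Rmin (fst e) (seg J)).

Lemma clamp_range (J : nat) (e : R * R) : 0 <= clamp J e <= seg J.
Proof.
  unfold clamp. pose proof (seg_nonneg J).
  unfold Rmax, Rmin; repeat destruct Rle_dec; lra.
Qed.

Lemma clamp_nearest (J : nat) (e : R * R) (a : R) : 0 <= a <= seg J ->
  dist2 e (clamp J e, 0) <= dist2 e (a, 0).
Proof.
  destruct e as [e1 e2]; intros Ha. unfold dist2, norm2, clamp; simpl.
  apply sqrt_le_1_alt, Rplus_le_compat_r.
  set (c := Rmax 0 (Rmin e1 (seg J))).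
  assert (Hc : c = e1 \/ (c = 0 /\ e1 <= 0) \/ (c = seg J /\ seg J <= e1)).
  { unfold c, Rmax, Rmin; repeat destruct Rle_dec; lra. }
  destruct Hc as [H|[[H H']|[H H']]]; rewrite H.
  - replace (e1 - e1) with 0 by ring. rewrite Rmult_0_l. apply Rle_0_sqr.
  - assert (0 <= - e1 * a) by (apply Rmult_le_pos; lra). nra.
  - assert (0 <= (e1 - seg J) * (seg J - a)) by (apply Rmult_le_pos; lra). nra.
Qed.

(* The distance from a point hanging from flat J to the ray. *)
Definition gap (x : Pt) (J : nat) (rest : list Letter) : R :=
  snd (pos_off x rest) + dist2 (fst (pos_off x rest)) (clamp J (fst (pos_off x rest)), 0).

Lemma gap_lower_bound (x : Pt) (J : nat) (rest : list Letter) (s : R) :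
  full x = prefix J ++ rest -> leaves_ray J rest -> off_ray x J rest -> 0 <= s ->
  gap x J rest <= pdist x (ray_pt s) /\
  (pdist x (ray_pt s) <= gap x J rest -> entry J <= s <= entry J + seg J).
Proof.
  intros Hf Hleave [G _] Hs. unfold gap.
  set (e := fst (pos_off x rest)). set (d := snd (pos_off x rest)).
  pose proof (clamp_nearest J e 0) as C0. pose proof (clamp_nearest J e (seg J)) as CN.
  pose proof (seg_nonneg J).
  destruct (Rlt_dec s (entry J)); [|destruct (Rle_dec s (entry J + seg J))].
  - rewrite (dist_ray_before x J rest s), ascent_split by auto. fold e d.
    specialize (C0 ltac:(lra)). split; intros; lra.
  - rewrite (dist_ray_within x J rest s) by (auto; lra). fold e d.
    pose proof (clamp_nearest J e (s - entry J) ltac:(lra)). split; intros; lra.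
  - rewrite (dist_ray_after x J rest s) by (auto; lra). fold e d.
    specialize (CN ltac:(lra)). split; intros; lra.
Qed.

Lemma gap_attained (x : Pt) (J : nat) (rest : list Letter) : full x = prefix J ++ rest ->
  pdist x (ray_pt (entry J + clamp J (fst (pos_off x rest)))) = gap x J rest.
Proof.
  intros Hf. pose proof (clamp_range J (fst (pos_off x rest))).
  rewrite (dist_ray_within x J rest) by (auto; lra). unfold gap. do 3 f_equal. ring.
Qed.

Lemma gap_pos (x : Pt) (J : nat) (rest : list Letter) :
  valid_pt x -> full x = prefix J ++ rest -> off_ray x J rest -> 0 < gap x J rest.
Proof.
  intros Hv Hf [G N]. unfold gap.
  pose proof (dist2_nonneg (fst (pos_off x rest)) (clamp J (fst (pos_off x rest)), 0)).
  destruct rest as [|l r].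
  - destruct x as [c a b|c l t]; [|exfalso; apply G; split; [reflexivity|exact I]].
    simpl in Hf. rewrite app_nil_r in Hf. subst c. simpl.
    rewrite Rplus_0_l. unfold dist2, norm2; simpl. apply sqrt_lt_R0.
    rewrite Rminus_0_r.
    destruct (Req_dec b 0) as [Hb|Hb].
    + subst b. assert (Hn : a - clamp J (a, 0) <> 0).
      { intros E. apply N. split; auto. exists a. pose proof (clamp_range J (a, 0)).
        split; [reflexivity|lra]. }
      pose proof (Rsqr_pos_lt _ Hn) as Hq. unfold Rsqr in Hq. lra.
    + pose proof (Rsqr_pos_lt _ Hb) as Hq. unfold Rsqr in Hq.
      pose proof (Rle_0_sqr (a - clamp J (a, b))). unfold Rsqr in *. lra.
  - assert (0 < snd (pos_off x (l :: r))).
    { simpl. rewrite climb_cost. pose proof (u_up_pos x Hv). pose proof (cost_nonneg r). simpl; lra. }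
    lra.
Qed.

Lemma dist_to_ray_on (x : XA) (J : nat) (sx : R) :
  on_ray_at (proj1_sig x) J sx -> is_dist_to (on_ray stair_ray) x 0.
Proof.
  intros [Hs0 [_ [_ Hd]]]. split.
  - intros z [s [Hs E]]. subst z. unfold dX; simpl. rewrite Hd by auto. apply Rabs_pos.
  - intros eps He. exists (stair_ray sx). split; [exists sx; auto|].
    unfold dX; simpl. rewrite Hd by auto. replace (sx - sx) with 0 by ring.
    rewrite Rabs_R0; lra.
Qed.

Lemma dist_to_ray_off (x : XA) (J : nat) (rest : list Letter) :
  full (proj1_sig x) = prefix J ++ rest -> leaves_ray J rest -> off_ray (proj1_sig x) J rest ->
  is_dist_to (on_ray stair_ray) x (gap (proj1_sig x) J rest).
Proof.
  intros Hf Hleave Off. split.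
  - intros z [s [Hs E]]. subst z. unfold dX; simpl.
    apply (proj1 (gap_lower_bound _ J rest s Hf Hleave Off Hs)).
  - intros eps He. pose proof (clamp_range J (fst (pos_off (proj1_sig x) rest))).
    exists (stair_ray (entry J + clamp J (fst (pos_off (proj1_sig x) rest)))).
    split; [eexists; split; [|reflexivity]; pose proof (entry_nonneg J); lra|].
    unfold dX; simpl. rewrite gap_attained by auto; lra.
Qed.

Lemma proj_minimizes (y q : XA) : proj_pt (on_ray stair_ray) y q ->
  exists s2, 0 <= s2 /\ q = stair_ray s2 /\
  forall s, 0 <= s -> pdist (proj1_sig y) (ray_pt s2) <= pdist (proj1_sig y) (ray_pt s).
Proof.
  intros [[s2 [Hs Eq]] [r [[Hlow _] Hr]]]. exists s2. subst q.
  split; auto. split; auto. intros s Hs'.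
  change (pdist (proj1_sig y) (ray_pt s2)) with (dX y (stair_ray s2)). rewrite Hr.
  apply (Hlow (stair_ray s)). exists s; auto.
Qed.

Lemma proj_of_ray_pt (y q : XA) (J : nat) (sy : R) :
  on_ray_at (proj1_sig y) J sy -> proj_pt (on_ray stair_ray) y q -> q = stair_ray sy.
Proof.
  intros [Hs0 [_ [_ Hd]]] Hp.
  destruct (proj_minimizes y q Hp) as [s2 [Hs2 [Eq Hm]]]. subst q.
  specialize (Hm sy Hs0). rewrite !Hd in Hm by auto.
  replace (sy - sy) with 0 in Hm by ring. rewrite Rabs_R0 in Hm.
  assert (E : sy - s2 = 0) by (revert Hm; unfold Rabs; destruct Rcase_abs; lra).
  replace s2 with sy by lra; reflexivity.
Qed.

Lemma proj_of_off_ray (y q : XA) (J : nat) (rest : list Letter) :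
  full (proj1_sig y) = prefix J ++ rest -> leaves_ray J rest -> off_ray (proj1_sig y) J rest ->
  proj_pt (on_ray stair_ray) y q -> exists s2, q = stair_ray s2 /\ entry J <= s2 <= entry J + seg J.
Proof.
  intros Hf Hleave Off Hp.
  destruct (proj_minimizes y q Hp) as [s2 [Hs2 [Eq Hm]]]. exists s2. split; auto.
  pose proof (clamp_range J (fst (pos_off (proj1_sig y) rest))).
  specialize (Hm (entry J + clamp J (fst (pos_off (proj1_sig y) rest)))
                 ltac:(pose proof (entry_nonneg J); lra)).
  rewrite gap_attained in Hm by auto.
  apply (proj2 (gap_lower_bound _ J rest s2 Hf Hleave Off Hs2)); auto.
Qed.

Lemma proj_near_flat (y q : XA) (J : nat) (rest : list Letter) :
  proj_pt (on_ray stair_ray) y q ->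
  full (proj1_sig y) = prefix J ++ rest -> leaves_ray J rest ->
  ((exists sy, on_ray_at (proj1_sig y) J sy) \/ off_ray (proj1_sig y) J rest) ->
  exists s2, 0 <= s2 /\ q = stair_ray s2 /\ entry J - 1 <= s2 <= entry J + seg J.
Proof.
  intros Hp Hf Hleave [[sy Ho]|Off].
  - exists sy. split; [apply Ho|]. split; [apply (proj_of_ray_pt y q J sy Ho Hp)|].
    apply Ho.
  - destruct (proj_of_off_ray y q J rest Hf Hleave Off Hp) as [s2 [E H]].
    exists s2. pose proof (entry_nonneg J). split; [lra|]. split; auto; lra.
Qed.

(* Leaving flat J towards a point hanging from a later flat passes through the
   exit point (seg J, 0) and the (positive length) rest of the way. *)
Lemma dist_to_later_flat (x y : Pt) (J : nat) (rest : list Letter) (J' : nat) (rest' : list Letter) :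
  valid_pt y -> full x = prefix J ++ rest -> leaves_ray J rest ->
  full y = prefix J' ++ rest' -> (J < J')%nat ->
  snd (pos_off x rest) + dist2 (fst (pos_off x rest)) (seg J, 0) < pdist x y.
Proof.
  intros Hv Hx Hleave Hy H.
  rewrite (pdist_generic x y rest (turns J (J' - J) ++ rest')).
  2:{ rewrite Hx, Hy. apply lcp_prefix_cross; auto. }
  2:{ replace (J' - J)%nat with (S (J' - J - 1)) by lia. intros [_ [E _]]; discriminate. }
  replace (J' - J)%nat with (S (J' - J - 1)) by lia. rewrite turns_S; simpl.
  rewrite hR_exit_letter, climb_cost. pose proof (u_up_pos y Hv).
  pose proof (cost_nonneg (tl (exit_letter J :: turns (S J) (J' - J - 1) ++ rest'))). lra.
Qed.

(* Towards a point hanging from an earlier flat, x first climbs out of flat J. *)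
Lemma dist_to_earlier_flat (x y : Pt) (J : nat) (rest : list Letter) (J' : nat) (rest' : list Letter) :
  valid_pt y -> not_bare_edge x rest ->
  full x = prefix J ++ rest -> full y = prefix J' ++ rest' -> leaves_ray J' rest' -> (J' < J)%nat ->
  snd (pos_off x rest) + dist2 (fst (pos_off x rest)) (0, 0) < pdist x y.
Proof.
  intros Hv G Hx Hy Hleave H.
  set (w := turns (S J') (J - J' - 1) ++ rest).
  assert (Hw : turns J' (J - J') ++ rest = exit_letter J' :: w).
  { unfold w. replace (J - J')%nat with (S (J - J' - 1)) at 1 by lia. reflexivity. }
  rewrite (pdist_generic x y (exit_letter J' :: w) rest').
  2:{ rewrite <- Hw, Hx, Hy, lcp_swap, lcp_prefix_cross; auto. }
  2:{ intros [E _]; discriminate. }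
  pose proof (ascent_split x rest G) as Hasc. unfold ascent in Hasc.
  pose proof (pos_off_nonneg y rest' Hv).
  pose proof (dist2_nonneg (fst (pos_off x (exit_letter J' :: w))) (fst (pos_off y rest'))).
  assert (Hclimb : snd (pos_off x (exit_letter J' :: w)) = u_up x + cost rest + (entry J - entry (S J'))).
  { unfold w; simpl. rewrite climb_cost; simpl. rewrite cost_app, cost_turns.
    replace (S J' + (J - J' - 1))%nat with J by lia. rewrite entry_S; unfold seg; ring. }
  pose proof (entry_mono (S J') J ltac:(lia)). lra.
Qed.

Lemma close_point_same_flat (x y : Pt) (J : nat) (rest : list Letter) (J' : nat) (rest' : list Letter) :
  valid_pt y -> full x = prefix J ++ rest -> leaves_ray J rest -> off_ray x J rest ->
  full y = prefix J' ++ rest' -> leaves_ray J' rest' ->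
  pdist x y <= gap x J rest -> J' = J.
Proof.
  intros Hv Hf Hleave Off Hf' Hleave' Hxy.
  set (e := fst (pos_off x rest)).
  pose proof (seg_nonneg J).
  pose proof (clamp_nearest J e 0 ltac:(lra)).
  pose proof (clamp_nearest J e (seg J) ltac:(lra)).
  unfold gap in Hxy; fold e in Hxy.
  destruct (Nat.lt_trichotomy J J') as [L|[L|L]]; auto; exfalso.
  - pose proof (dist_to_later_flat x y J rest J' rest' Hv Hf Hleave Hf' L) as Hd.
    fold e in Hd; lra.
  - pose proof (dist_to_earlier_flat x y J rest J' rest' Hv (proj1 Off) Hf Hf' Hleave' L) as Hd.
    fold e in Hd; lra.
Qed.

Lemma nrm_ge_entry (x : XA) (J : nat) (rest : list Letter) :
  full (proj1_sig x) = prefix J ++ rest -> not_bare_edge (proj1_sig x) rest -> entry J <= nrm x.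
Proof.
  intros Hf G. pose proof (nrm_nonneg x).
  destruct (Rlt_dec 0 (entry J)); [|pose proof (entry_nonneg J); lra].
  unfold nrm, dX. change (proj1_sig o) with o_pt. rewrite pdist_sym, <- ray_pt_0.
  rewrite (dist_ray_before _ J rest 0), ascent_split by (auto; lra).
  pose proof (pos_off_nonneg (proj1_sig x) rest (proj2_sig x)).
  pose proof (dist2_nonneg (fst (pos_off (proj1_sig x) rest)) (0, 0)). lra.
Qed.

Lemma proj_close_to_ray_pt (x y p : XA) (J : nat) (sx : R) :
  on_ray_at (proj1_sig x) J sx -> dX x y <= 0 ->
  proj_pt (on_ray stair_ray) x p \/ proj_pt (on_ray stair_ray) y p -> p = stair_ray sx.
Proof.
  intros Ho Hxy [Hp|Hp]; [exact (proj_of_ray_pt x p J sx Ho Hp)|].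
  destruct Ho as (Hs0 & Hray & Hr & Hd).
  assert (Hyx : pdist (proj1_sig y) (ray_pt sx) <= 0).
  { unfold dX in Hxy. rewrite Hray, pdist_sym; exact Hxy. }
  destruct (on_or_off_ray (proj1_sig y) (proj2_sig y))
    as [J' [rest' [Hf' [Hleave' [[sy Ho']|Off']]]]].
  - assert (E : sy = sx).
    { destruct Ho' as (_ & _ & _ & Hd'). rewrite Hd' in Hyx by auto.
      revert Hyx; unfold Rabs; destruct Rcase_abs; lra. }
    subst sy. exact (proj_of_ray_pt y p J' sx Ho' Hp).
  - pose proof (gap_pos _ J' rest' (proj2_sig y) Hf' Off').
    pose proof (proj1 (gap_lower_bound _ J' rest' sx Hf' Hleave' Off' Hs0)). lra.
Qed.

Lemma proj_close_to_off_pt (x y p : XA) (J : nat) (rest : list Letter) :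
  full (proj1_sig x) = prefix J ++ rest -> leaves_ray J rest -> off_ray (proj1_sig x) J rest ->
  dX x y <= gap (proj1_sig x) J rest ->
  proj_pt (on_ray stair_ray) x p \/ proj_pt (on_ray stair_ray) y p ->
  exists s, 0 <= s /\ p = stair_ray s /\ entry J - 1 <= s <= entry J + seg J.
Proof.
  intros Hf Hleave Off Hxy [Hp|Hp]; [eapply proj_near_flat; eauto|].
  destruct (on_or_off_ray (proj1_sig y) (proj2_sig y)) as [J' [rest' [Hf' [Hleave' Hc']]]].
  assert (EJ : J' = J) by (eapply close_point_same_flat; eauto; apply proj2_sig).
  subst J'. eapply proj_near_flat; eauto.
Qed.

Lemma stair_ray_contracting :
  (forall t, 0 <= t -> 1 <= k t) -> (forall s t, 0 <= s -> s <= t -> k s <= k t) ->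
  contracting k (on_ray stair_ray).
Proof.
  intros Hk1 Hkm. exists 2. intros x y Hxy p q Hp Hq.
  pose proof (nrm_nonneg x) as Hn. pose proof (Hk1 (nrm x) Hn).
  destruct (on_or_off_ray (proj1_sig x) (proj2_sig x)) as [J [rest [Hf [Hleave [[sx Ho]|Off]]]]].
  - pose proof (Hxy 0 (dist_to_ray_on x J sx Ho)) as Hxy0.
    rewrite (proj_close_to_ray_pt x y p J sx Ho Hxy0 Hp),
            (proj_close_to_ray_pt x y q J sx Ho Hxy0 Hq).
    unfold dX; simpl proj1_sig. destruct Ho as [Hs0 _].
    rewrite ray_pt_dist, Rminus_diag, Rabs_R0 by auto; lra.
  - pose proof (Hxy _ (dist_to_ray_off x J rest Hf Hleave Off)) as Hxy0.
    destruct (proj_close_to_off_pt x y p J rest Hf Hleave Off Hxy0 Hp) as [s1 [P1 [E1 R1]]].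
    destruct (proj_close_to_off_pt x y q J rest Hf Hleave Off Hxy0 Hq) as [s2 [P2 [E2 R2]]].
    subst p q. unfold dX; simpl proj1_sig. rewrite ray_pt_dist by auto.
    (* diameter <= seg J + 1 <= 2 k(entry J) <= 2 k(|x|) *)
    pose proof (nrm_ge_entry x J rest Hf (proj1 Off)) as Hnx.
    pose proof (entry_nonneg J) as HJ0.
    pose proof (Hkm (entry J) (nrm x) HJ0 Hnx).
    pose proof (seg_nat_floor (entry J) (Hk1 _ HJ0)) as Hseg; fold (seg J) in Hseg.
    pose proof (Hk1 _ HJ0).
    assert (Rabs (s1 - s2) <= seg J + 1) by (unfold Rabs; destruct Rcase_abs; lra).
    lra.
Qed.

(* For large J the segment seg J beats any multiple of k' at the exit point of
   flat J: seg J > k(t) - 1 with t = entry J, while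
   k'(t + seg J) <= k'(2 t) <= 2 k'(t) = o(k(t)). *)
Lemma seg_beats (k' : R -> R) : admissible k -> admissible k' ->
  lim_infty_zero (fun t => k' t / k t) ->
  forall c, exists J, (1 <= J)%nat /\ 1 <= seg J /\ c * k' (entry J + seg J) < seg J.
Proof.
  intros [Hk1 [_ [_ Hks]]] [Hk1' [Hkm' [Hkc' _]]] Hl c.
  set (C := Rabs c + 1). assert (HC : 1 <= C) by (unfold C; pose proof (Rabs_pos c); lra).
  set (eps := / (4 * C)). assert (He : 0 < eps) by (unfold eps; apply Rinv_0_lt_compat; lra).
  destruct (Hl eps He) as [M1 HM1]. destruct (Hks 1 ltac:(lra)) as [M2 HM2].
  destruct (entry_unbounded (Rmax 1 (Rmax M1 M2))) as [J [HJ HtJ]].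
  exists J. split; auto.
  set (t := entry J) in *.
  pose proof (Rmax_l 1 (Rmax M1 M2)). pose proof (Rmax_r 1 (Rmax M1 M2)).
  pose proof (Rmax_l M1 M2). pose proof (Rmax_r M1 M2).
  pose proof (Hk1 t ltac:(lra)) as Hkt. pose proof (Hk1' t ltac:(lra)) as Hkt'.
  assert (Hsmall : k' t < eps * k t) by (apply ratio_lt; [lra|apply HM1; lra]).
  assert (Hsub : k t < t) by (rewrite <- (Rmult_1_l t) at 2; apply ratio_lt; [lra|apply HM2; lra]).
  assert (Hk4 : 4 <= k t).
  { assert (eps * k t * (4 * C) = k t) by (unfold eps; field; lra).
    assert (k' t * (4 * C) < eps * k t * (4 * C)) by (apply Rmult_lt_compat_r; lra). nra. }
  assert (Hseg : k t - 1 < seg J <= k t) by (apply seg_nat_floor; lra).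
  set (n := seg J) in *.
  split; [lra|].
  assert (A1 : k' (t + n) <= k' (2 * t)) by (apply Hkm'; lra).
  assert (A2 : k' (2 * t) <= 2 * k' t) by (apply concave_double; [exact Hkc'|pose proof (Hk1' 0 (Rle_refl 0)); lra|lra]).
  assert (A3 : c * k' (t + n) <= C * k' (t + n)).
  { apply Rmult_le_compat_r; [pose proof (Hk1' (t + n) ltac:(lra)); lra|].
    unfold C; pose proof (Rle_abs c); lra. }
  assert (A4 : C * k' (t + n) <= C * (2 * k' t)) by (apply Rmult_le_compat_l; lra).
  assert (A5 : C * (2 * k' t) < C * (2 * (eps * k t))) by (apply Rmult_lt_compat_l; lra).
  assert (A6 : C * (2 * (eps * k t)) = k t / 2) by (unfold eps; field; lra).
  lra.
Qed.

Definition flat_pt (J : nat) (a b : R) : XA := exist valid_pt (FP (prefix J) a b) (valid_prefix J).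

(* From the base point one climbs to flat J along the ray. *)
Lemma nrm_flat_pt (J : nat) (a b : R) : (1 <= J)%nat ->
  nrm (flat_pt J a b) = entry J + norm2 (a, b).
Proof.
  intros HJ. unfold nrm, dX. change (proj1_sig o) with o_pt.
  rewrite pdist_sym, <- ray_pt_0. destruct J as [|m]; [lia|].
  pose proof (entry_S_ge1 m).
  rewrite (dist_ray_before _ (S m) []); try lra.
  - change (ascent _ []) with (norm2 (a, b) + 1 + 0). ring.
  - simpl; rewrite app_nil_r; reflexivity.
  - intros [_ E]; exact E.
Qed.

Lemma below_segment_dist (J : nat) (a n : R) : 0 <= a <= seg J -> 0 < n ->
  is_dist_to (on_ray stair_ray) (flat_pt J a (- n)) n /\
  proj_pt (on_ray stair_ray) (flat_pt J a (- n)) (stair_ray (entry J + a)).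
Proof.
  intros Ha Hn.
  assert (Hf : full (FP (prefix J) a (- n)) = prefix J ++ []) by (simpl; rewrite app_nil_r; auto).
  assert (Hgap : gap (FP (prefix J) a (- n)) J [] = n).
  { unfold gap, clamp; simpl. rewrite Rmin_left, Rmax_right, dist2_vert by lra. ring. }
  assert (Hdist : is_dist_to (on_ray stair_ray) (flat_pt J a (- n)) n).
  { assert (Off : off_ray (FP (prefix J) a (- n)) J []).
    { split; [intros [_ E]; exact E|]. intros [_ [a' [E _]]]. injection E; intros; lra. }
    pose proof (dist_to_ray_off (flat_pt J a (- n)) J [] Hf ltac:(intros l r H; discriminate) Off)
      as D.
    simpl in D. rewrite Hgap in D. exact D. }
  split; auto. split.
  - exists (entry J + a). pose proof (entry_nonneg J). split; [lra|reflexivity].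
  - exists n. split; auto.
    change (pdist (FP (prefix J) a (- n)) (ray_pt (entry J + a)) = n).
    rewrite (dist_ray_within _ J []) by (auto; lra); simpl.
    replace (entry J + a - entry J) with a by ring. rewrite dist2_vert by lra. ring.
Qed.

(* The two points below the ends of a long segment violate k'-contraction. *)
Lemma stair_ray_not_contracting (k' : R -> R) : admissible k -> admissible k' ->
  lim_infty_zero (fun t => k' t / k t) -> ~ contracting k' (on_ray stair_ray).
Proof.
  intros Hk Hk' Hl [c Hc].
  destruct (seg_beats k' Hk Hk' Hl c) as [J [HJ [Hn Hlt]]].
  destruct (below_segment_dist J 0 (seg J) ltac:(lra) ltac:(lra)) as [Dx Px].
  destruct (below_segment_dist J (seg J) (seg J) ltac:(lra) ltac:(lra)) as [_ Py].
  set (n := seg J) in *.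
  set (x := flat_pt J 0 (- n)) in *. set (y := flat_pt J n (- n)) in *.
  assert (Dxy : dX x y = n).
  { change (pdist (FP (prefix J) 0 (- n)) (FP (prefix J) n (- n)) = n).
    rewrite (pdist_generic _ _ [] []).
    - simpl. rewrite dist2_horiz by lra. ring.
    - simpl. rewrite <- (app_nil_r (prefix J)), lcp_app. reflexivity.
    - simpl; tauto. }
  assert (Hxy : forall r, is_dist_to (on_ray stair_ray) x r -> dX x y <= r).
  { intros r Hr. rewrite (dist_unique _ _ _ _ Hr Dx). lra. }
  pose proof (Hc x y Hxy _ _ (or_introl Px) (or_intror Py)) as H.
  assert (Dpq : dX (stair_ray (entry J + 0)) (stair_ray (entry J + n)) = n).
  { pose proof (entry_nonneg J).
    change (pdist (ray_pt (entry J + 0)) (ray_pt (entry J + n)) = n).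
    rewrite ray_pt_dist by lra.
    rewrite Rabs_left1 by lra. ring. }
  assert (Nx : nrm x = entry J + n).
  { unfold x. rewrite nrm_flat_pt, <- dist2_0, dist2_vert by (auto; lra). reflexivity. }
  rewrite Dpq, Nx in H. lra.
Qed.

End Staircase.

Theorem proposition6p3 (k k' : R -> R) :
  admissible k -> admissible k' -> lim_infty_zero (fun t => k' t / k t) ->
  (forall g : R -> XA, geodesic_ray g ->
      contracting k' (on_ray g) -> contracting k (on_ray g)) /\
  (exists g : R -> XA, geodesic_ray g /\ contracting k (on_ray g) /\
      ~ contracting k' (on_ray g)).
Proof.
  intros Hk Hk' Hl. split.
  - intros g _. apply contracting_mono; auto.
  - exists (stair_ray k). split; [apply stair_ray_geodesic|]. split.
    + destruct Hk as [Hk1 [Hkm _]]. apply stair_ray_contracting; auto.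
    + apply stair_ray_not_contracting; auto.
Qed.
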